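(* Multi-winner approval voting (AV) is the only Thiele rule (for the fixed $m$ and $k$) that satisfies the excellence criterion.
   Context: Let $\mathcal C=\{c_1,\dots,c_m\}$ ($m\ge2$) be the candidates, $\mathcal A$ the set of non-empty subsets of $\mathcal C$ (ballots), and a profile a map $A:N_A\to\mathcal A$ from a non-empty finite set of voters $N_A\subseteq\mathbb N$. Fix $k\in\{1,\dots,m-1\}$, and let $\mathcal W_k$ be the set of $k$-element subsets of $\mathcal C$ (committees). An ABC voting rule maps each profile to a non-empty subset of $\mathcal W_k$. A Thiele rule is an ABC voting rule for which there is a non-decreasing $s:\{0,\dots,k\}\to\mathbb R$ with $s(0)=0$ such that $f(A)$ is the set of committees $W$ maximizing $\sum_{i\in N_A}s(|A_i\cap W|)$. AV is the Thiele rule with $s(x)=x$. A profile $A$ is a party-list profile if there is a partition $\mathcal P_A=\{P_1,\dots,P_\ell\}$ of $\mathcal C$ such that every voter's ballot equals some $P_j$; $n_j$ denotes the number of voters whose ballot is $P_j$. An ABC voting rule $f$ satisfies the excellence criterion if for all party-list profiles $A$, all $W\in f(A)$, and all parties $P_i,P_j\in\mathcal P_A$ with $n_i<n_j$, $P_i\subseteq W$ implies $P_j\subseteq W$. *)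

From mathcomp Require Import all_boot all_order all_algebra finmap.
From mathcomp Require Import Rstruct.
Set Implicit Arguments. Unset Strict Implicit. Unset Printing Implicit Defensive.
Import Order.TTheory GRing.Theory Num.Theory.
Local Open Scope fset_scope.
Local Open Scope ring_scope.

Record profile (m : nat) := Profile {
  voters : {fset nat};
  ballot : voters -> {set 'I_m};
  voters_nonempty : voters != fset0;
  ballot_nonempty : forall i : voters, ballot i != set0 }.

Definition rule (m : nat) := profile m -> {set {set 'I_m}}.

Definition abc_rule (m k : nat) (f : rule m) : Prop :=
  forall A : profile m, f A != set0 /\ forall W, W \in f A -> #|W| = k.

Definition thiele_score (m : nat) (s : nat -> Rdefinitions.R) (A : profile m)
    (W : {set 'I_m}) : Rdefinitions.R :=
  \sum_(i : voters A) s #|ballot i :&: W|.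

Definition thiele_outcome (m k : nat) (s : nat -> Rdefinitions.R) (A : profile m)
    : {set {set 'I_m}} :=
  [set W : {set 'I_m} | (#|W| == k) &&
     [forall W' : {set 'I_m}, (#|W'| == k) ==>
        (thiele_score s A W' <= thiele_score s A W)]].

(* f is a Thiele rule: an ABC rule given by some non-decreasing
   s : {0..k} -> R with s 0 = 0 (values of s beyond k are irrelevant). *)
Definition is_thiele_rule (m k : nat) (f : rule m) : Prop :=
  abc_rule k f /\
  exists s : nat -> Rdefinitions.R,
    s 0%N = 0 /\
    (forall x y : nat, (x <= y <= k)%N -> s x <= s y) /\
    forall A : profile m, f A = thiele_outcome k s A.

Definition AV (m k : nat) : rule m :=
  fun A => thiele_outcome k (fun x : nat => x%:R) A.
Arguments AV : clear implicits.

Definition party_list_wrt (m : nat) (A : profile m) (P : {set {set 'I_m}}) :=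
  partition P [set: 'I_m] /\ forall i : voters A, ballot i \in P.

Definition party_support (m : nat) (A : profile m) (Pj : {set 'I_m}) : nat :=
  #|[set i : voters A | ballot i == Pj]|.

Definition excellence (m : nat) (f : rule m) : Prop :=
  forall (A : profile m) (P : {set {set 'I_m}}), party_list_wrt A P ->
  forall W, W \in f A ->
  forall Pi Pj, Pi \in P -> Pj \in P ->
    (party_support A Pi < party_support A Pj)%N ->
    Pi \subset W -> Pj \subset W.

From mathcomp Require Import all_boot all_order all_algebra finmap.
From mathcomp Require Import Rstruct zify lra.
Import Order.TTheory GRing.Theory Num.Theory.
Set Implicit Arguments. Unset Strict Implicit. Unset Printing Implicit Defensive.
Local Open Scope ring_scope.

(* AV is excellent: if a winning committee contains a weaker party but misses a
   member c of a stronger one, swapping c for a member of the weaker party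
   raises the AV score by the difference of the two supports.

   Conversely, let s be the scores of an excellent Thiele rule.  Consider the
   party-list profile in which the first p <= k candidates form a party X and
   every other candidate forms a singleton party, the supports of X and of the
   singletons differing by one voter.  If X has the larger support, every
   winning committee contains X, so it beats the committee trading one member
   of X for a singleton; if X has the smaller support, no committee containing
   X wins.  As the supports grow, these give s p - s (p-1) >= s 1 and
   s p - s (p-1) <= s 1 (and s 1 > 0), so s is a positive multiple of the
   identity on {0..k} and the rule is AV. *)

Section SeqProfile.
Variables (m : nat) (bs : seq {set 'I_m}).
Hypotheses (bs_neq0 : (0 < size bs)%N) (set0_notin_bs : set0 \notin bs).

Definition seq_voters : {fset nat} := seq_fset tt (iota 0 (size bs)).

Lemma seq_voters_neq0 : seq_voters != fset0.
Proof.
apply/eqP => voters0.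
have : 0%N \in seq_voters by rewrite seq_fsetE mem_iota add0n bs_neq0.
by rewrite voters0 inE.
Qed.

Definition seq_ballot (i : seq_voters) : {set 'I_m} := nth set0 bs (val i).

Lemma seq_ballot_in i : seq_ballot i \in bs.
Proof. by apply: mem_nth; have := fsvalP i; rewrite seq_fsetE mem_iota. Qed.

Lemma seq_ballot_neq0 i : seq_ballot i != set0.
Proof. by apply: contraNneq set0_notin_bs => <-; apply: seq_ballot_in. Qed.

Definition seq_profile : profile m :=
  @Profile m seq_voters seq_ballot seq_voters_neq0 seq_ballot_neq0.

Lemma big_seq_profile (V : nmodType) (F : {set 'I_m} -> V) :
  \sum_(i : voters seq_profile) F (ballot i) = \sum_(B <- bs) F B.
Proof.
rewrite /= /seq_ballot.
rewrite -(big_seq_fsetE _ _ xpredT (fun j => F (nth set0 bs j))).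
rewrite (perm_big _ (seq_fset_perm _ _)) undup_id ?iota_uniq //.
by rewrite (big_nth set0) /index_iota subn0.
Qed.

End SeqProfile.

Section PartyListProfile.
Variables (m : nat) (P : {set {set 'I_m}}) (w : {set 'I_m} -> nat).
Hypotheses (P_partition : partition P [set: 'I_m])
           (w_pos : (0 < \sum_(B in P) w B)%N).

Definition party_ballots : seq {set 'I_m} :=
  flatten [seq nseq (w B) B | B <- enum P].

Lemma mem_party_ballots B : (B \in party_ballots) = (B \in P) && (0 < w B)%N.
Proof.
apply/flatten_mapP/andP => [[B'] | [BP wB]].
  by rewrite mem_enum => B'P; rewrite mem_nseq => /andP[wB' /eqP ->].
by exists B; rewrite ?mem_enum // mem_nseq wB eqxx.
Qed.

Lemma size_party_ballots_gt0 : (0 < size party_ballots)%N.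
Proof.
rewrite size_flatten /shape -map_comp sumnE big_map big_enum /=.
by under eq_bigr do rewrite size_nseq.
Qed.

Lemma set0_notin_party_ballots : set0 \notin party_ballots.
Proof. by rewrite mem_party_ballots; case/and3P: P_partition => _ _ /negbTE ->. Qed.

Definition party_profile : profile m :=
  seq_profile size_party_ballots_gt0 set0_notin_party_ballots.

Lemma big_party_profile (V : nmodType) (F : {set 'I_m} -> V) :
  \sum_(i : voters party_profile) F (ballot i) = \sum_(B in P) F B *+ w B.
Proof.
rewrite big_seq_profile big_flatten big_map big_enum /=.
by apply: eq_bigr => B _; rewrite big_nseq iter_addr_0.
Qed.

Lemma party_profile_party_list : party_list_wrt party_profile P.
Proof.
split=> // i; have := seq_ballot_in i.
by rewrite mem_party_ballots => /andP[].
Qed.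

Lemma party_support_party_profile B : B \in P -> party_support party_profile B = w B.
Proof.
move=> BP; rewrite /party_support cardsE -sum1_card big_mkcond /=.
have := big_party_profile (fun B' => (B' == B : nat)); rewrite /= => ->.
rewrite (bigD1 B) //= eqxx big1 => [|B' /andP[_ /negbTE ->]].
  by rewrite addr0 natn.
by rewrite mul0rn.
Qed.

Lemma thiele_score_party_profile s W :
  thiele_score s party_profile W = \sum_(B in P) s #|B :&: W| *+ w B.
Proof. exact: (big_party_profile (fun B => s #|B :&: W|)). Qed.

Lemma excellence_party_profile (f : rule m) W Pi Pj :
  excellence f -> W \in f party_profile -> Pi \in P -> Pj \in P ->
  (w Pi < w Pj)%N -> Pi \subset W -> Pj \subset W.
Proof.
move=> f_exc W_in Pi_P Pj_P lt.
by apply: (f_exc _ _ party_profile_party_list _ W_in _ _ Pi_P Pj_P);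
  rewrite !party_support_party_profile.
Qed.

End PartyListProfile.

Lemma card_setI1 (T : finType) (c : T) (W : {set T}) : #|[set c] :&: W| = (c \in W).
Proof.
case: (boolP (c \in W)) => cW; first by rewrite (setIidPl _) ?cards1 // sub1set.
rewrite (_ : _ :&: _ = set0) ?cards0 //; apply/setP => y; rewrite !inE.
by apply/andP => -[/eqP -> ]; apply/negP.
Qed.

Section PartyAndSingletons.
Variables (m : nat) (X : {set 'I_m}).

Definition party_singletons : {set {set 'I_m}} := X |: [set [set c] | c in ~: X].

Lemma set1_neq_party c : c \notin X -> [set c] != X.
Proof. by apply: contraNneq => <-; apply: set11. Qed.

Lemma party_notin_singletons : X \notin [set [set c] | c in ~: X].
Proof.
by apply/imsetP => -[c]; rewrite inE => /set1_neq_party/eqP cX eX; apply: cX; rewrite eX.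
Qed.

Lemma singleton_in_party_singletons c : c \notin X -> [set c] \in party_singletons.
Proof. by move=> cX; rewrite setU1r // imset_f // inE. Qed.

Lemma party_singletons_partition : X != set0 -> partition party_singletons [set: 'I_m].
Proof.
move=> X_neq0; apply/and3P; split.
- apply/eqP/setP => c; rewrite inE; apply/bigcupP.
  case: (boolP (c \in X)) => cX; first by exists X; rewrite ?setU11.
  by exists [set c]; rewrite ?set11 ?singleton_in_party_singletons.
- apply/trivIsetP => B1 B2.
  move=> /setU1P[-> | /imsetP[c1 c1X ->]] /setU1P[-> | /imsetP[c2 c2X ->]].
  + by rewrite eqxx.
  + by rewrite inE in c2X; rewrite disjoint_sym disjoints1.
  + by rewrite inE in c1X; rewrite disjoints1.
  + by move=> c12; rewrite disjoints1 inE; apply: contra_neq c12 => ->.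
- rewrite !inE eq_sym (negbTE X_neq0) /=; apply/imsetP => -[c _] /esym/eqP.
  by apply/negP/set0Pn; exists c; apply: set11.
Qed.

Variables (a b : nat).

Definition party_singleton_weight (B : {set 'I_m}) : nat := if B == X then a else b.

Hypotheses (X_neq0 : X != set0) (a_gt0 : (0 < a)%N).

Lemma sum_party_singleton_weight_gt0 :
  (0 < \sum_(B in party_singletons) party_singleton_weight B)%N.
Proof.
by rewrite (bigD1 X) ?setU11 //= /party_singleton_weight eqxx ltn_addr.
Qed.

Definition party_singletons_profile : profile m :=
  party_profile (party_singletons_partition X_neq0) sum_party_singleton_weight_gt0.

Lemma thiele_score_party_singletons s W : s 0%N = 0 ->
  thiele_score s party_singletons_profile W =
  s #|X :&: W| *+ a + s 1%N *+ b *+ (#|W| - #|X :&: W|).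
Proof.
move=> s0; rewrite thiele_score_party_profile big_setU1 ?party_notin_singletons //=.
rewrite big_imset /=; last by move=> c1 c2 _ _ /set1_inj.
rewrite /party_singleton_weight eqxx setIC -cardsD -sumr_const; congr (_ + _).
rewrite big_mkcond [RHS]big_mkcond; apply: eq_bigr => c _; rewrite !inE.
case: (boolP (c \in X)) => //= cX.
rewrite (negbTE (set1_neq_party cX)) card_setI1.
by case: (c \in W); rewrite ?s0 ?mul0rn.
Qed.

Lemma excellence_party_singletons (f : rule m) W c :
  excellence f -> W \in f party_singletons_profile -> c \notin X ->
  ((a < b)%N -> X \subset W -> c \in W) /\ ((b < a)%N -> c \in W -> X \subset W).
Proof.
move=> f_exc W_in cX; rewrite -sub1set.
have X_P : X \in party_singletons by apply: setU11.
have c_P := singleton_in_party_singletons cX.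
have wX : party_singleton_weight X = a by rewrite /party_singleton_weight eqxx.
have wc : party_singleton_weight [set c] = b.
  by rewrite /party_singleton_weight (negbTE (set1_neq_party cX)).
split=> lt; apply: (excellence_party_profile f_exc W_in); rewrite ?wX ?wc //.
Qed.

End PartyAndSingletons.

Lemma card_ord_lt m j : (j <= m)%N -> #|[set c : 'I_m | (c < j)%N]| = j.
Proof.
move=> jm.
have -> : [set c : 'I_m | (c < j)%N] = widen_ord jm @: [set: 'I_j].
  apply/setP => c; rewrite inE; apply/idP/imsetP => [cj | [i _ ->]]; last first.
    exact: (ltn_ord i).
  by exists (Ordinal cj); rewrite ?inE //; apply: ord_inj.
rewrite card_imset ?cardsT ?card_ord // => i i' /(congr1 val) /= ii'.
exact: ord_inj.
Qed.

Lemma thiele_outcome_neq0 m k (s : nat -> Rdefinitions.R) (A : profile m) :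
  (k <= m)%N -> thiele_outcome k s A != set0.
Proof.
move=> km.
have prefix_k : #|[set c : 'I_m | (c < k)%N]| == k by rewrite card_ord_lt.
case: (arg_maxP (P := fun W : {set 'I_m} => #|W| == k) (thiele_score s A) prefix_k).
move=> W Wk W_max.
apply/set0Pn; exists W; rewrite inE Wk /=.
by apply/forallP => W'; apply/implyP; apply: W_max.
Qed.

Lemma mulrn_bounded_le0 (R : archiRealFieldType) (x y : R) :
  (forall n, x *+ n.+1 <= y) -> x <= 0.
Proof.
move=> bounded; rewrite leNgt; apply/negP => x_gt0.
have y_ge0 : 0 <= y / x.
  by apply: divr_ge0 (ltW x_gt0); have := bounded 0%N; rewrite mulr1n; lra.
have := archi_boundP y_ge0; set n := Num.Def.archi_bound _.
rewrite ltr_pdivrMr // => y_lt; have := bounded n.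
by rewrite mulrSr -mulr_natl; lra.
Qed.

Section ExcellentThieleScore.
Variables (m k : nat) (s : nat -> Rdefinitions.R).
Hypotheses (k_gt0 : (0 < k)%N) (k_lt_m : (k < m)%N) (s0 : s 0%N = 0)
  (s_mono : forall x y : nat, (x <= y <= k)%N -> s x <= s y)
  (s_excellent : excellence (fun A : profile m => thiele_outcome k s A)).

Lemma s1_ge0 : 0 <= s 1%N.
Proof. by rewrite -s0; apply: s_mono; rewrite k_gt0. Qed.

(* The committee of the first [k] candidates contains the party of the first
   [p] candidates but misses the better supported singleton of candidate [k],
   so by excellence some committee scores more. *)
Lemma full_party_beaten p n : (0 < p <= k)%N ->
  exists2 q, (q < p)%N & (s p - s q) *+ n.+1 < s 1%N *+ n.+2 *+ (p - q).
Proof.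
case/andP => p_gt0 p_le_k.
set X := [set c : 'I_m | (c < p)%N].
have Xp : #|X| = p by rewrite card_ord_lt // (leq_trans p_le_k (ltnW k_lt_m)).
have X_neq0 : X != set0 by rewrite -card_gt0 Xp.
pose A := party_singletons_profile n.+2 X_neq0 (ltn0Sn n).
set W0 := [set c : 'I_m | (c < k)%N].
have W0k : #|W0| = k by rewrite card_ord_lt // ltnW.
have XW0 : X \subset W0.
  by apply/subsetP => c; rewrite !inE => /leq_trans; apply.
have W0_out : W0 \notin thiele_outcome k s A.
  apply/negP => W0_in.
  have kX : Ordinal k_lt_m \notin X by rewrite inE -leqNgt.
  have := (excellence_party_singletons s_excellent W0_in kX).1 (ltnSn _) XW0.
  by rewrite inE ltnn.
rewrite inE W0k eqxx /= in W0_out.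
case/forallPn: W0_out => W; rewrite negb_imply -ltNge => /andP[/eqP Wk].
rewrite !thiele_score_party_singletons // Wk W0k (setIidPl XW0) Xp.
set q := #|X :&: W| => better.
have q_le_p : (q <= p)%N by rewrite -Xp subset_leq_card ?subsetIl.
have q_lt_p : (q < p)%N.
  by rewrite ltn_neqAle q_le_p andbT; apply: contraTneq better => ->; rewrite ltxx.
exists q => //; move: better.
rewrite (_ : (k - q = (k - p) + (p - q))%N); last by lia.
by rewrite mulrnDr mulrnBl; lra.
Qed.

(* Now the party is better supported than the singletons, so it lies in every
   winning committee, which thus scores at least as much as the committee
   trading candidate [p.-1] for candidate [k]. *)
Lemma party_increment_lower p n : (0 < p <= k)%N ->
  s 1%N *+ n <= (s p - s p.-1) *+ n.+1.
Proof.
case/andP => p_gt0 p_le_k.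
set X := [set c : 'I_m | (c < p)%N].
have Xp : #|X| = p by rewrite card_ord_lt // (leq_trans p_le_k (ltnW k_lt_m)).
have X_neq0 : X != set0 by rewrite -card_gt0 Xp.
pose A := party_singletons_profile n X_neq0 (ltn0Sn n).
have /set0Pn[W W_in] := @thiele_outcome_neq0 _ _ s A (ltnW k_lt_m).
have XW : X \subset W.
  case: (boolP (W \subset X)) => [WX | /subsetPn[c cW cX]].
    suff /eqP -> : W == X by [].
    by rewrite eqEcard WX Xp; move: W_in; rewrite inE => /andP[/eqP -> _].
  exact: (excellence_party_singletons s_excellent W_in cX).2 (ltnSn n) cW.
move: W_in; rewrite inE => /andP[/eqP Wk /forallP W_max].
have p1_lt_m : (p.-1 < m)%N.
  exact: leq_ltn_trans (leq_pred p) (leq_ltn_trans p_le_k k_lt_m).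
set d := Ordinal p1_lt_m.
set W1 := [set c : 'I_m | (c < k.+1)%N] :\ d.
have dX : d \in X by rewrite inE /= ltn_predL.
have XW1 : X :&: W1 = X :\ d.
  apply/setP => c; rewrite !inE; case: (ltnP c p) => cp /=; last by rewrite andbF.
  by rewrite (leq_trans cp (leqW p_le_k)) andbT.
have Xd : #|X :\ d| = p.-1 by move: (cardsD1 d X); rewrite dX Xp add1n => ->.
have W1k : #|W1| = k.
  have d_lt_k1 : (d < k.+1)%N by rewrite /= ltnS (leq_trans (leq_pred p) p_le_k).
  move: (cardsD1 d [set c : 'I_m | (c < k.+1)%N]).
  by rewrite card_ord_lt // inE d_lt_k1 => -[].
have := W_max W1; rewrite W1k eqxx /= !thiele_score_party_singletons //.
rewrite W1k Wk (setIidPl XW) XW1 Xd Xp.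
rewrite (_ : (k - p.-1 = (k - p).+1)%N); last by lia.
lra.
Qed.

Lemma s_increment_ge p : (0 < p <= k)%N -> s 1%N <= s p - s p.-1.
Proof.
move=> hp; rewrite -subr_le0; apply: (@mulrn_bounded_le0 _ _ (s p - s p.-1)) => n.
by have := party_increment_lower n.+1 hp; lra.
Qed.

Lemma s_sub_ge i j : (i <= j <= k)%N -> s 1%N *+ (j - i) <= s j - s i.
Proof.
elim: j => [|j IH] /andP[ij jk].
  by move: ij; rewrite leqn0 => /eqP ->; rewrite subrr mulr0n.
move: ij; rewrite leq_eqVlt ltnS => /predU1P[-> | ij].
  by rewrite subnn subrr mulr0n.
have IHj : s 1%N *+ (j - i) <= s j - s i by apply: IH; rewrite ij ltnW.
have incr : s 1%N <= s j.+1 - s j by apply: (s_increment_ge (p := j.+1)).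
by rewrite subSn //; lra.
Qed.

Lemma s_increment_le p : (0 < p <= k)%N -> s p - s p.-1 <= s 1%N.
Proof.
move=> hp; case/andP: (hp) => p_gt0 p_le_k.
rewrite -subr_le0; apply: (@mulrn_bounded_le0 _ _ (s 1%N *+ k)) => n.
have [q q_lt_p beaten] := full_party_beaten n hp.
have q_p1_k : (q <= p.-1 <= k)%N.
  by rewrite -ltnS prednK // q_lt_p (leq_trans (leq_pred p) p_le_k).
have gap := ler_wMn2r n.+1 (s_sub_ge q_p1_k).
have := ler_wpMn2l s1_ge0 (leq_trans (leq_subr q p) p_le_k).
move: beaten gap; rewrite (_ : (p - q = (p.-1 - q).+1)%N); last by lia.
lra.
Qed.

Lemma s1_gt0 : 0 < s 1%N.
Proof.
have [q q_lt1 beaten] := full_party_beaten (p := 1%N) 0 k_gt0.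
by move: q_lt1 beaten; rewrite ltnS leqn0 => /eqP ->; rewrite s0 subn0; lra.
Qed.

Lemma s_linear x : (x <= k)%N -> s x = s 1%N *+ x.
Proof.
elim: x => [|x IH] xk; first by rewrite s0 mulr0n.
have := s_increment_ge (p := x.+1) xk; have := s_increment_le (p := x.+1) xk.
by rewrite /= (IH (ltnW xk)) mulrSr; lra.
Qed.

End ExcellentThieleScore.

Definition approvals m (A : profile m) (c : 'I_m) : nat :=
  #|[set i : voters A | c \in ballot i]|.

Lemma AV_score m (A : profile m) W :
  thiele_score (fun x : nat => x%:R) A W = (\sum_(c in W) approvals A c)%:R.
Proof.
rewrite /thiele_score -natr_sum; congr _%:R.
transitivity (\sum_(i : voters A) \sum_(c in W) (c \in ballot i : nat)).
  apply: eq_bigr => i _; rewrite -sum1_card big_mkcond [RHS]big_mkcond /=.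
  by apply: eq_bigr => c _; rewrite !inE; case: (c \in ballot i); case: (c \in W).
rewrite exchange_big /=; apply: eq_bigr => c _.
rewrite /approvals -sum1_card [RHS]big_mkcond /=; apply: eq_bigr => i _.
by rewrite inE; case: (c \in ballot i).
Qed.

Lemma approvals_party m (A : profile m) P Q c :
  party_list_wrt A P -> Q \in P -> c \in Q -> approvals A c = party_support A Q.
Proof.
case=> /and3P[_ P_triv _] ballot_P Q_P cQ; apply: eq_card => i; rewrite !inE.
apply/idP/eqP => [c_i | -> //].
by rewrite -(def_pblock P_triv (ballot_P i) c_i) (def_pblock P_triv Q_P cQ).
Qed.

Lemma AV_excellence m k : excellence (AV m k).
Proof.
move=> A P A_P W W_in Pi Pj Pi_P Pj_P lt Pi_W.
apply/subsetP => c c_Pj; apply/negPn/negP => c_W.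
have /set0Pn[d d_Pi] : Pi != set0.
  by case: A_P => /and3P[_ _ P0] _; apply: contraNneq P0 => <-.
have d_W : d \in W := subsetP Pi_W d d_Pi.
move: W_in; rewrite inE => /andP[/eqP Wk /forallP W_max].
have c_Wd : c \notin W :\ d by rewrite inE negb_and c_W orbT.
have W'k : #|c |: (W :\ d)| = k by rewrite cardsU1 c_Wd /= -Wk (cardsD1 d W) d_W.
have := implyP (W_max (c |: (W :\ d))); rewrite W'k eqxx => /(_ isT).
rewrite !AV_score ler_nat big_setU1 //= [X in (_ <= X)%N](big_setD1 d) //=.
rewrite (approvals_party A_P Pi_P d_Pi) (approvals_party A_P Pj_P c_Pj).
by move: lt; lia.
Qed.

Lemma AV_thiele m k : (k <= m)%N -> is_thiele_rule k (AV m k).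
Proof.
move=> km; split.
  move=> A; split; first exact: thiele_outcome_neq0.
  by move=> W; rewrite inE => /andP[/eqP].
exists (fun x : nat => x%:R); split; first by [].
by split=> // x y /andP[xy _]; rewrite ler_nat.
Qed.

Lemma thiele_outcome_linear m k (s : nat -> Rdefinitions.R) c (A : profile m) :
  0 < c -> (forall x, (x <= k)%N -> s x = c *+ x) ->
  thiele_outcome k s A = AV m k A.
Proof.
move=> c_gt0 s_lin.
have score (W : {set 'I_m}) : #|W| = k ->
    thiele_score s A W = c * thiele_score (fun x : nat => x%:R) A W.
  move=> Wk; rewrite /thiele_score mulr_sumr; apply: eq_bigr => i _.
  by rewrite s_lin ?mulr_natr // -Wk subset_leq_card ?subsetIr.
apply/setP => W; rewrite /AV !inE; case Wk: (#|W| == k) => //=.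
apply: eq_forallb => W'; case W'k: (#|W'| == k) => //=.
by rewrite !score ?(eqP Wk) ?(eqP W'k) // ler_pM2l.
Qed.

Theorem proposition1 (m k : nat) (hk1 : (1 <= k)%N) (hkm : (k <= m - 1)%N) :
  is_thiele_rule k (AV m k) /\ excellence (AV m k) /\
  forall f : rule m, is_thiele_rule k f -> excellence f ->
    forall A : profile m, f A = AV m k A.
Proof.
have k_lt_m : (k < m)%N by lia.
split; first exact: AV_thiele (ltnW k_lt_m).
split; first exact: AV_excellence.
move=> f [_ [s [s0 [s_mono f_s]]]] f_exc A.
have s_exc : excellence (fun A : profile m => thiele_outcome k s A).
  by move=> B P B_P W; rewrite -f_s; apply: f_exc.
rewrite f_s (thiele_outcome_linear _ (s1_gt0 hk1 k_lt_m s0 s_exc)) //.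
exact: s_linear hk1 k_lt_m s0 s_mono s_exc.
Qed.
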